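(* For every $\beta>0$, the origin is the unique equilibrium of the ODE $\dot x=f(x)$ on $\mathbb R^n\times\mathbb R^n$, $$f(x_1,x_2)=\begin{bmatrix}-(1+\beta)Dx_1+\beta Dx_2+\gamma DP\big(M(x_2+Q^* )-M(Q^* )\big)\\ -(1+\beta)Dx_2+\beta Dx_1+\gamma DP\big(M(x_1+Q^* )-M(Q^* )\big)\end{bmatrix},$$ and every solution converges to the origin as $t\to\infty$. Equivalently, every solution of $\dot Q^A=DR+\gamma DPM(Q^B)-(1+\beta)DQ^A+\beta DQ^B$, $\dot Q^B=DR+\gamma DPM(Q^A)-(1+\beta)DQ^B+\beta DQ^A$ satisfies $(Q^A(t),Q^B(t))\to(Q^*,Q^* )$.
   Context: Finite MDP with states $\mathcal S$, actions $\mathcal A$, kernel $P$, expected reward vector $R\in\mathbb R^n$, discount $\gamma\in[0,1)$; $n=|\mathcal S||\mathcal A|$. $D$ is the diagonal matrix of a probability distribution $d$ on $\mathcal S\times\mathcal A$ with $d(s,a)>0$; $P$ is the $n\times|\mathcal S|$ matrix with row $(s,a)$ equal to $P(\cdot\mid s,a)$; $M(Q)(s)=\max_aQ(s,a)$; $Q^*=R+\gamma PM(Q^* )$ is the optimal Q-function. *)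

From HB Require Import structures.
From mathcomp Require Import all_boot all_order all_algebra.
From mathcomp Require Import all_classical all_reals all_analysis.
Set Implicit Arguments. Unset Strict Implicit. Unset Printing Implicit Defensive.
Import Order.TTheory GRing.Theory Num.Theory.
Import numFieldNormedType.Exports.
Local Open Scope ring_scope.

Section MDP.
Variables (R : realType) (S A : finType).

(* Q-functions are vectors indexed by S x A (so n = |S||A|). *)
Definition qvec := S * A -> R.

Definition is_kernel (P : S -> A -> S -> R) : Prop :=
  (forall s a t, 0 <= P s a t) /\ (forall s a, \sum_(t : S) P s a t = 1).

Definition is_pos_distr (d : S * A -> R) : Prop :=
  (forall sa, 0 < d sa) /\ \sum_(sa : S * A) d sa = 1.

(* M(Q)(s) = max_a Q(s,a)  (a0 : A only witnesses that A is nonempty;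
   the value does not depend on it). *)
Definition Mx (a0 : A) (Q : qvec) (s : S) : R :=
  \big[Num.max/Q (s, a0)]_(a : A) Q (s, a).

Definition Pmul (P : S -> A -> S -> R) (v : S -> R) : qvec :=
  fun sa => \sum_(t : S) P sa.1 sa.2 t * v t.

Definition is_Qstar a0 (P : S -> A -> S -> R) (Rw : qvec) (gamma : R) (Qs : qvec) :=
  forall sa, Qs sa = Rw sa + gamma * Pmul P (Mx a0 Qs) sa.

(* first block of f(x1,x2); the second block is fblock x2 x1 *)
Definition fblock a0 (P : S -> A -> S -> R) (d : S * A -> R) (gamma beta : R)
  (Qs : qvec) (x1 x2 : qvec) : qvec :=
  fun sa => - (1 + beta) * (d sa * x1 sa) + beta * (d sa * x2 sa)
    + gamma * (d sa * Pmul P (fun s => Mx a0 (fun p => x2 p + Qs p) s - Mx a0 Qs s) sa).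

Definition gblock a0 (P : S -> A -> S -> R) (Rw : qvec) (d : S * A -> R) (gamma beta : R)
  (QA QB : qvec) : qvec :=
  fun sa => d sa * Rw sa + gamma * (d sa * Pmul P (Mx a0 QB) sa)
    - (1 + beta) * (d sa * QA sa) + beta * (d sa * QB sa).

End MDP.

From HB Require Import structures.
From mathcomp Require Import all_boot all_order all_algebra.
From mathcomp Require Import all_classical all_reals all_analysis.
From mathcomp Require Import ring lra.
Import Order.TTheory GRing.Theory Num.Theory.
Import numFieldNormedType.Exports.
Local Open Scope classical_set_scope.
Local Open Scope ring_scope.

(* Fix 0 < c < min_sa d(sa) (1 - gamma) and m(t) = K e^(-c t) with K large enough
   that |x_b(1)| < m(1) coordinatewise. The sup-norm ball of radius m(t) is forward
   invariant: M and P are nonexpansive for the sup norm, so at a first time where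
   some sg * x_b(t)(sa) (sg = +-1) touches m(t) its derivative is at most
   d(sa) (-(1 + beta) + beta + gamma) m(t) = -d(sa) (1 - gamma) m(t) < -c m(t) = m'(t).
   Hence |x(t)| < K e^(-c t). An equilibrium is a constant solution, so it is 0, and
   the (Q^A, Q^B) system is the same ODE for x = Q - Q^*. *)

Section RealFunctions.
Variable R : realType.
Implicit Types (f : R -> R) (x l : R).

Lemma is_derive_quotient {f x l} : is_derive x 1 f l ->
  (fun h => h^-1 * (f (x + h) - f x)) @ 0^' --> l.
Proof.
move=> [df <-]; apply: cvg_trans df; apply: near_eq_cvg; near=> h.
by rewrite /= [h *: 1]mulr1 (addrC h x).
Unshelve. all: end_near.
Qed.

Lemma is_derive_cvg {f x l} : is_derive x 1 f l -> f @ x --> f x.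
Proof. by move=> [df _]; exact/differentiable_continuous/derivable1_diffP. Qed.

Lemma is_derive_lt0_left {f x l} : is_derive x 1 f l -> l < 0 ->
  exists2 e, 0 < e & forall h, 0 < h < e -> f x < f (x - h).
Proof.
move=> df l0.
have : \forall h \near 0^', h^-1 * (f (x + h) - f x) < 0.
  exact: cvgr_lt (is_derive_quotient df) _ l0.
move=> /nbhs_ballP [e e0 he].
exists e => // h /andP[h0 he'].
have : (- h)^-1 * (f (x - h) - f x) < 0.
  apply: he; last by rewrite oppr_eq0 gt_eqF.
  by rewrite /ball /= sub0r opprK gtr0_norm.
by rewrite invrN mulNr oppr_lt0 pmulr_rgt0 ?invr_gt0 // subr_gt0.
Qed.

Lemma near_forall_lt0 {I : finType} {y : I -> R -> R} {x} :
  (forall i, y i @ x --> y i x) -> (forall i, y i x < 0) ->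
  exists2 e, 0 < e & forall u, `|x - u| < e -> forall i, y i u < 0.
Proof.
move=> cy y0.
have : \forall u \near x, forall i, y i u < 0.
  exact: filter_forall _ (fun i => cvgr_lt _ (cy i) _ (y0 i)).
by move=> /nbhs_ballP [e e0 he]; exists e => // u; apply: he.
Qed.

Lemma le0_of_lt0_left f x a : f @ x --> f x -> a < x ->
  (forall u, a <= u < x -> f u < 0) -> f x <= 0.
Proof.
move=> cf ax fneg; rewrite leNgt; apply/negP => fx0.
have : \forall u \near x, 0 < f u by exact: cvgr_gt cf _ fx0.
move=> /nbhs_ballP [e e0 he].
pose m := Num.min e (x - a).
have m0 : 0 < m by rewrite lt_min e0 subr_gt0.
have me : m <= e by rewrite ge_min lexx.
have mxa : m <= x - a by rewrite ge_min lexx orbT.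
have : ball x e (x - m / 2).
  by rewrite /ball /= opprB addrC subrK gtr0_norm //; lra.
move=> /he; have := fneg (x - m / 2); lra.
Qed.

Section FirstCrossing.
Variables (I : finType) (y y' : I -> R -> R) (t0 : R).
Hypothesis y_deriv : forall t, t0 <= t -> forall i, is_derive t 1 (y i) (y' i t).
Hypothesis y_init : forall i, y i t0 < 0.
Hypothesis y'_crossing : forall t i,
  t0 < t -> (forall j, y j t <= 0) -> y i t = 0 -> y' i t < 0.

Let y_cvg t : t0 <= t -> forall i, y i @ t --> y i t.
Proof. by move=> tt0 i; exact: is_derive_cvg (y_deriv t tt0 i). Qed.

Let negative_upto s := t0 <= s /\ forall u, t0 <= u <= s -> forall i, y i u < 0.

Let negative_upto_t0 : negative_upto t0.
Proof.
split=> // u /andP[t0u ut0] i.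
by have -> : u = t0 by apply/le_anti; rewrite ut0.
Qed.

Let negative_upto_unbounded : ~ has_ubound negative_upto.
Proof.
move=> ub; have hsup : has_sup negative_upto by split; [exists t0|].
set ts := sup negative_upto.
have t0ts : t0 <= ts by exact: sup_upper_bound.
have below u : t0 <= u < ts -> forall i, y i u < 0.
  move=> /andP[t0u uts]; have tsu : 0 < ts - u by rewrite subr_gt0.
  have [s [_ neg_s] tss] := sup_adherent tsu hsup.
  by apply: neg_s; rewrite t0u /=; move: tss; rewrite -/ts; lra.
have ts_le0 i : y i ts <= 0.
  have [<-|t0lt] := eqVneq t0 ts; first exact/ltW/y_init.
  have t0lt' : t0 < ts by rewrite lt_neqAle t0lt.
  by apply: le0_of_lt0_left (y_cvg ts t0ts i) t0lt' _ => u /below.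
have [i yi0] : exists i, y i ts = 0.
  apply/not_existsP => yts_neq0.
  have yts_lt0 j : y j ts < 0 by rewrite lt_neqAle ts_le0 andbT; exact/eqP.
  have [e e0 he] := near_forall_lt0 (y_cvg ts t0ts) yts_lt0.
  suff /(sup_upper_bound hsup) : negative_upto (ts + e / 2) by rewrite -/ts; lra.
  split=> [|u /andP[t0u ue] j]; first lra.
  have [uts|tsu] := ltP u ts; first by apply: below; rewrite t0u.
  by apply: he; rewrite distrC ger0_norm; lra.
have t0ts' : t0 < ts.
  rewrite lt_neqAle t0ts andbT; apply/eqP => t0E.
  by move: (y_init i); rewrite t0E yi0 ltxx.
have [e e0 he] :=
  is_derive_lt0_left (y_deriv ts t0ts i) (y'_crossing ts i t0ts' ts_le0 yi0).
pose m := Num.min e (ts - t0).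
have m0 : 0 < m by rewrite lt_min e0 subr_gt0.
have me : m <= e by rewrite ge_min lexx.
have mts : m <= ts - t0 by rewrite ge_min lexx orbT.
have : y i (ts - m / 2) < 0 by apply: below; apply/andP; split; lra.
have : y i ts < y i (ts - m / 2) by apply: he; apply/andP; split; lra.
rewrite yi0; lra.
Qed.

Lemma first_crossing_lt0 t : t0 <= t -> forall i, y i t < 0.
Proof.
move=> t0t i.
have [[s [[_ neg_s] ts]]|none] := pselect (exists s, negative_upto s /\ t <= s).
  by apply: neg_s; rewrite t0t.
exfalso; apply: negative_upto_unbounded; exists t => s neg_s.
by rewrite leNgt; apply/negP => ts; apply: none; exists s; split; last exact: ltW.
Qed.
End FirstCrossing.

Lemma is_derive_exp_decay (K c t : R) :
  is_derive t 1 (fun u => K * expR (- (c * u))) (- c * (K * expR (- (c * t)))).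
Proof.
have dlin : is_derive t 1 (fun u : R => - (c * u)) (- c).
  by have := is_deriveN (is_deriveZ c (is_derive_id t 1)); rewrite [c *: 1]mulr1.
have -> : - c * (K * expR (- (c * t))) = K *: (expR (- (c * t)) * - c).
  by rewrite /GRing.scale /=; ring.
by have := is_deriveZ K (is_derive1_comp (is_derive_expR _) dlin).
Qed.

Lemma exp_decay_cvg0 (K c : R) : 0 < c -> (fun u => K * expR (- (c * u))) @ +oo --> 0.
Proof.
move=> c0; rewrite -(mulr0 K); apply: cvgMl_tmp.
have cu_pinfty : (fun u : R => c * u) @ +oo --> +oo.
  apply/cvgryPge => B; near=> u.
  suff : c^-1 * B <= u by rewrite ler_pdivrMl.
  near: u; apply: nbhs_pinfty_ge; exact: num_real.
exact: cvg_comp _ _ cu_pinfty (@cvgr_expR R).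
Unshelve. all: end_near.
Qed.
End RealFunctions.

Section BellmanOperators.
Variables (R : realType) (S A : finType) (a0 : A).

Lemma Mx_le_shift (F G : qvec R S A) s B :
  (forall a, F (s, a) <= G (s, a) + B) -> Mx a0 F s <= Mx a0 G s + B.
Proof.
move=> FG; apply: bigmax_le => [|a _];
  by apply: le_trans (FG _) _; rewrite lerD2r; exact: le_bigmax.
Qed.

Lemma Mx_shift_dist (x Q : qvec R S A) s B : (forall a, `|x (s, a)| <= B) ->
  `|Mx a0 (fun p => x p + Q p) s - Mx a0 Q s| <= B.
Proof.
move=> xB; have xB' a : - B <= x (s, a) <= B by rewrite -ler_norml.
rewrite ler_norml; apply/andP; split.
  suff : Mx a0 Q s <= Mx a0 (fun p => x p + Q p) s + B by lra.
  by apply: Mx_le_shift => a; have := xB' a; lra.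
suff : Mx a0 (fun p => x p + Q p) s <= Mx a0 Q s + B by lra.
by apply: Mx_le_shift => a; have := xB' a; lra.
Qed.

Lemma Pmul_norm_le (P : S -> A -> S -> R) (v : S -> R) sa B : is_kernel P ->
  (forall t, `|v t| <= B) -> `|Pmul P v sa| <= B.
Proof.
move=> [P_ge0 P_sum1] vB; apply: le_trans (ler_norm_sum _ _ _) _.
rewrite -[leRHS]mul1r -(P_sum1 sa.1 sa.2) mulr_suml; apply: ler_sum => t _.
by rewrite normrM ger0_norm // ler_wpM2l.
Qed.

Lemma Pmul_sub (P : S -> A -> S -> R) (v w : S -> R) sa :
  Pmul P (fun s => v s - w s) sa = Pmul P v sa - Pmul P w sa.
Proof. by rewrite /Pmul -sumrB; apply: eq_bigr => t _; rewrite mulrBr. Qed.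
End BellmanOperators.

Section Dynamics.
Variables (R : realType) (S A : finType) (a0 : A) (P : S -> A -> S -> R)
  (d : S * A -> R) (gamma beta : R) (Qs : qvec R S A).
Local Notation f := (fblock a0 P d gamma beta Qs).

Lemma fblock00 : f (fun=> 0) (fun=> 0) = fun=> 0.
Proof.
apply/funext => sa; rewrite /fblock.
have -> : (fun p => (fun=> 0 : R) p + Qs p) = Qs by apply/funext => p; rewrite add0r.
rewrite /Pmul big1 => [|t _]; last by rewrite subrr mulr0.
by rewrite !mulr0 !addr0.
Qed.

Lemma gblock_fblock (Rw : qvec R S A) : is_Qstar a0 P Rw gamma Qs -> forall QA QB,
  gblock a0 P Rw d gamma beta QA QB = f (fun p => QA p - Qs p) (fun p => QB p - Qs p).
Proof.
move=> Qstar QA QB; apply/funext => sa; rewrite /gblock /fblock /=.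
have -> : (fun p => QB p - Qs p + Qs p) = QB by apply/funext => p; rewrite subrK.
rewrite Pmul_sub [in RHS]mulrBr [Rw sa](_ : _ = Qs sa - gamma * Pmul P (Mx a0 Qs) sa).
  by ring.
by rewrite [Qs sa]Qstar; ring.
Qed.
Hypotheses (P_kernel : is_kernel P) (gamma_ge0 : 0 <= gamma) (gamma_lt1 : gamma < 1)
  (d_gt0 : forall sa, 0 < d sa) (beta_ge0 : 0 <= beta).

Lemma fblock_extremum_le (x1 x2 : qvec R S A) sa (B sg : R) :
  `|sg| <= 1 -> (forall p, `|x2 p| <= B) -> sg * x1 sa = B ->
  sg * f x1 x2 sa <= - (d sa * (1 - gamma) * B).
Proof.
move=> sg1 x2B x1B; have d0 := ltW (d_gt0 sa).
pose pm := Pmul P (fun s => Mx a0 (fun p => x2 p + Qs p) s - Mx a0 Qs s) sa.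
have pmB : `|pm| <= B.
  by apply: Pmul_norm_le => // s; apply: Mx_shift_dist => a; exact: x2B.
have sg_le (v : R) : sg * v <= `|v|.
  by apply: le_trans (ler_norm _) _; rewrite normrM ler_piMl.
have tail : sg * (beta * x2 sa + gamma * pm) <= (beta + gamma) * B.
  apply: le_trans (sg_le _) _; apply: le_trans (ler_normD _ _) _.
  rewrite !normrM !(ger0_norm beta_ge0) !(ger0_norm gamma_ge0) mulrDl.
  by apply: lerD; apply: ler_wpM2l.
have -> : sg * f x1 x2 sa
    = d sa * (- (1 + beta) * B + sg * (beta * x2 sa + gamma * pm)).
  by rewrite /fblock -/pm -x1B; ring.
have -> : - (d sa * (1 - gamma) * B) = d sa * (- (1 + beta) * B + (beta + gamma) * B).
  by ring.
by rewrite ler_wpM2l // lerD2l.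
Qed.

Let c := (1 - gamma) * \big[Num.min/1]_sa d sa / 2.

Let c_gt0 : 0 < c.
Proof.
rewrite divr_gt0 // mulr_gt0 ?subr_gt0 //.
by apply: lt_bigmin => // sa _; exact: d_gt0.
Qed.

Let c_lt sa : c < d sa * (1 - gamma).
Proof.
have dmin_le : \big[Num.min/1]_sa d sa <= d sa by exact: bigmin_le.
have dmin_gt0 : 0 < \big[Num.min/1]_sa d sa by apply: lt_bigmin => // p _; exact: d_gt0.
have gamma1 : 0 < 1 - gamma by rewrite subr_gt0.
have := ler_wpM2l (ltW gamma1) dmin_le.
have := mulr_gt0 gamma1 (d_gt0 sa).
rewrite /c; move: (\big[Num.min/1]_sa d sa) => dm; lra.
Qed.

Variables x1 x2 : R -> qvec R S A.
Hypothesis x_ode : forall t : R, 0 < t -> forall sa,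
  is_derive t 1 (fun u => x1 u sa) (f (x1 t) (x2 t) sa) /\
  is_derive t 1 (fun u => x2 u sa) (f (x2 t) (x1 t) sa).

Let x (b : bool) := if b then x2 else x1.

Let x_deriv (t : R) b sa : 0 < t ->
  is_derive t 1 (fun u => x b u sa) (f (x b t) (x (~~ b) t) sa).
Proof. by move=> t0; have [] := x_ode t t0 sa; case: b. Qed.

Lemma fblock_solution_exp_bound K : (forall b sa, `|x b 1 sa| < K * expR (- c)) ->
  forall t, 1 <= t -> forall b sa, `|x b t sa| < K * expR (- (c * t)).
Proof.
move=> x_lt_at1 t t1 b sa.
pose m u := K * expR (- (c * u)).
(* y (s, b, sa) = (-1)^s x_b(sa) - m, so that all y < 0 says |x_b(sa)| < m. *)
pose y (i : bool * bool * (S * A)) u := (-1) ^+ i.1.1 * x i.1.2 u i.2 - m u.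
pose y' (i : bool * bool * (S * A)) u :=
  (-1) ^+ i.1.1 * f (x i.1.2 u) (x (~~ i.1.2) u) i.2 + c * m u.
suff y_lt0 : forall i, y i t < 0.
  have := y_lt0 (false, b, sa); have := y_lt0 (true, b, sa).
  by rewrite /y /m /= expr0 expr1 mul1r mulN1r ltr_norml => ? ?; apply/andP; split; lra.
apply: (@first_crossing_lt0 _ _ y y' 1) => //
  [u u1 [[s b'] p]|[[s b'] p]|u [[s b'] p] u1 y_le0 yi0].
- have := is_deriveB (is_deriveZ ((-1) ^+ s) (x_deriv u b' p (lt_le_trans ltr01 u1)))
    (is_derive_exp_decay _ K c u).
  by rewrite /y' /= mulNr opprK.
- have := x_lt_at1 b' p; rewrite /y /m /= mulr1 ltr_norml => /andP[? ?].
  by case: s; rewrite /= ?expr0 ?expr1 ?mul1r ?mulN1r; lra.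
- have K_gt0 : 0 < K.
    have := x_lt_at1 b' p; rewrite -(pmulr_lgt0 _ (expR_gt0 (- c))).
    exact: le_lt_trans.
  have m_gt0 : 0 < m u by rewrite mulr_gt0 ?expR_gt0.
  have x_le q b'' : `|x b'' u q| <= m u.
    have := y_le0 (false, b'', q); have := y_le0 (true, b'', q).
    by rewrite /y /= expr0 expr1 mul1r mulN1r ler_norml => ? ?; apply/andP; split; lra.
  have sg_x : (-1) ^+ s * x b' u p = m u by move: yi0; rewrite /y /=; lra.
  have sg1 : `|(-1) ^+ s : R| <= 1 by rewrite normr_sign.
  have := @fblock_extremum_le (x b' u) (x (~~ b') u) p (m u) _
    sg1 (x_le ^~ (~~ b')) sg_x.
  have c_lt_p : 0 < d p * (1 - gamma) - c by rewrite subr_gt0.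
  have := mulr_gt0 c_lt_p m_gt0.
  rewrite /y'; lra.
Qed.

Lemma fblock_solution_cvg0 sa :
  (fun t => x1 t sa) @ +oo --> 0 /\ (fun t => x2 t sa) @ +oo --> 0.
Proof.
pose K := (1 + \sum_(i : bool * (S * A)) `|x i.1 1 i.2|) * expR c.
have x_lt_at1 b p : `|x b 1 p| < K * expR (- c).
  rewrite /K -mulrA -expRD subrr expR0 mulr1 (bigD1 (b, p)) //=.
  have : 0 <= \sum_(i | i != (b, p)) `|x i.1 1 i.2| by apply: sumr_ge0.
  by move: (\sum_(i | _) _) => r; lra.
have x_cvg0 b : (fun t => x b t sa) @ +oo --> 0.
  apply: (@squeeze_cvgr _ _ _ _
    (fun t => - (K * expR (- (c * t)))) (fun t => K * expR (- (c * t)))).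
  - near=> t.
    have t1 : 1 <= t by near: t; apply: nbhs_pinfty_ge; exact: num_real.
    by rewrite -ler_norml ltW // fblock_solution_exp_bound.
  - by rewrite -oppr0; apply: cvgN; exact: exp_decay_cvg0.
  - exact: exp_decay_cvg0.
by split; [exact: (x_cvg0 false) | exact: (x_cvg0 true)].
Unshelve. all: end_near.
Qed.
End Dynamics.

Theorem mainTheorem19 (R : realType) (S A : finType) (a0 : A)
  (P : S -> A -> S -> R) (Rw : S * A -> R) (gamma : R) (d : S * A -> R)
  (Qs : S * A -> R) (beta : R) :
  is_kernel P -> 0 <= gamma -> gamma < 1 -> is_pos_distr d ->
  is_Qstar a0 P Rw gamma Qs -> 0 < beta ->
  (* the origin is the unique equilibrium of xdot = f(x) *)
  (forall x1 x2 : S * A -> R,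
     (fblock a0 P d gamma beta Qs x1 x2 = (fun=> 0) /\
      fblock a0 P d gamma beta Qs x2 x1 = (fun=> 0))
     <-> (x1 = (fun=> 0) /\ x2 = (fun=> 0))) /\
  (* every solution (on t > 0) converges to the origin *)
  (forall x1 x2 : R -> S * A -> R,
     (forall t : R, 0 < t -> forall sa,
        is_derive t 1 (fun u => x1 u sa) (fblock a0 P d gamma beta Qs (x1 t) (x2 t) sa) /\
        is_derive t 1 (fun u => x2 u sa) (fblock a0 P d gamma beta Qs (x2 t) (x1 t) sa)) ->
     forall sa, ((fun t : R => x1 t sa) @ +oo%R --> (0 : R)) /\ ((fun t : R => x2 t sa) @ +oo%R --> (0 : R))) /\
  (* equivalently, for the (Q^A, Q^B) system *)
  (forall QA QB : R -> S * A -> R,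
     (forall t : R, 0 < t -> forall sa,
        is_derive t 1 (fun u => QA u sa) (gblock a0 P Rw d gamma beta (QA t) (QB t) sa) /\
        is_derive t 1 (fun u => QB u sa) (gblock a0 P Rw d gamma beta (QB t) (QA t) sa)) ->
     forall sa, ((fun t : R => QA t sa) @ +oo%R --> (Qs sa : R)) /\ ((fun t : R => QB t sa) @ +oo%R --> (Qs sa : R))).
Proof.
move=> P_kernel gamma_ge0 gamma_lt1 [d_gt0 _] Qstar beta_gt0.
have cvg0 := @fblock_solution_cvg0 R S A a0 P d gamma beta Qs
  P_kernel gamma_ge0 gamma_lt1 d_gt0 (ltW beta_gt0).
have gblockE := @gblock_fblock R S A a0 P d gamma beta Qs Rw Qstar.
split; [|split=> // QA QB Q_ode sa].
- move=> x1 x2; split=> [[f12 f21]|[-> ->]]; last by rewrite fblock00.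
  have cst_ode (t : R) : 0 < t -> forall sa,
      is_derive t 1 (fun=> x1 sa) (fblock a0 P d gamma beta Qs x1 x2 sa) /\
      is_derive t 1 (fun=> x2 sa) (fblock a0 P d gamma beta Qs x2 x1 sa).
    by move=> _ sa; rewrite f12 f21; split; exact: is_derive_cst.
  by split; apply/funext => sa; have [x1_0 x2_0] := cvg0 _ _ cst_ode sa;
    [exact: norm_cvg_unique (cvg_cst _) x1_0 | exact: norm_cvg_unique (cvg_cst _) x2_0].
- have := cvg0 (fun t p => QA t p - Qs p) (fun t p => QB t p - Qs p) _ sa.
  rewrite !subr_cvg0; apply=> t t0 p; have [dA dB] := Q_ode t t0 p.
  have subQs (g : R -> R) v : is_derive t 1 g v -> is_derive t 1 (fun u => g u - Qs p) v.
    by move=> dg; rewrite -[v]subr0; exact: is_deriveB.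
  by rewrite -!gblockE; split; exact: subQs.
Qed.
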